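(* Under the model and the disjoint threshold-based policy with threshold $P_S>0$ described in the context, the long-run transmission probability of $S$, $$\Psi_S=\lim_{n\to\infty}\frac1n\sum_{t=1}^n \mathbf{E}\big[\mathbf{1}_{B_S^t\ge P_S}\big],$$ exists and equals $$\Psi_S=\min\Big(1,\frac{\lambda_S}{P_S}\Big).$$
   Context: Time is slotted, $t=1,2,\dots$ (one slot = unit time, so energy and power are identified). The transmitter $S$ harvests energy $E_S^t\ge 0$ at the end of slot $t$; $\{E_S^t\}_t$ is a stationary and ergodic sequence with mean $\mathbf{E}[E_S^t]=\lambda_S>0$. The battery has infinite capacity; $B_S^t$ is the battery energy at the beginning of slot $t$, with $B_S^1=0$, and $B_S^{t+1}=B_S^t-P_S^t+E_S^t$, where $P_S^t$ is the energy consumed in slot $t$. Disjoint threshold-based policy with threshold $P_S>0$: $P_S^t=P_S$ if $B_S^t\ge P_S$ (then $S$ transmits), and $P_S^t=0$ otherwise. *)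

From HB Require Import structures.
From mathcomp Require Import all_boot all_order all_algebra.
From mathcomp Require Import all_classical all_reals all_analysis.
Set Implicit Arguments. Unset Strict Implicit. Unset Printing Implicit Defensive.
Import Order.TTheory GRing.Theory Num.Theory.
Local Open Scope classical_set_scope.
Local Open Scope ring_scope.

Definition consumption {R : realType} (Ps b : R) : R :=
  if Ps <= b then Ps else 0.

(* Battery level at the beginning of slot t (0-based: slot t here is slot t+1
   of the paper), given the harvested energies E 0, E 1, ... :
   B 0 = 0,  B (t+1) = B t - consumption Ps (B t) + E t. *)
Fixpoint battery {R : realType} (E : nat -> R) (Ps : R) (t : nat) : R :=
  match t with
  | 0 => 0
  | t'.+1 => battery E Ps t' - consumption Ps (battery E Ps t') + E t'
  end.

Definition measure_preserving {d} {T : measurableType d} {R : realType}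
  (P : probability T R) (theta : T -> T) : Prop :=
  measurable_fun setT theta /\
  forall A : set T, measurable A -> P (theta @^-1` A) = P A.

Definition ergodic {d} {T : measurableType d} {R : realType}
  (P : probability T R) (theta : T -> T) : Prop :=
  forall A : set T, measurable A -> theta @^-1` A = A ->
    P A = 0%E \/ P A = 1%E.

From HB Require Import structures.
From mathcomp Require Import all_boot all_order all_algebra.
From mathcomp Require Import all_classical all_reals all_analysis.
From mathcomp Require Import measurable_realfun ring lra.
Import Order.TTheory GRing.Theory Num.Theory numFieldNormedType.Exports.
Local Open Scope classical_set_scope.
Local Open Scope ring_scope.

(* Pathwise, the battery after n slots is the harvested energy S_n minus Ps
   times the number of transmissions, and it is nonnegative; so transmissions
   are at most min(n, S_n / Ps), and taking expectations bounds the mean rate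
   by min 1 (lam / Ps).  Conversely, the battery is below Ps at an idle slot,
   so idle slots are controlled by the largest deficit k Ps - S_k.  For
   a < lam the Birkhoff sums of a - f are almost surely bounded above: the
   event that they are is theta-invariant, hence trivial by ergodicity, and
   if it were null the maximal ergodic lemma would give E f <= a.  On the
   event that these sums stay below m, the deficit grows at most like
   k (Ps - min Ps a) + m, which gives the matching lower bound. *)

Section battery.
Context {R : realType} (e : nat -> R) (Ps : R).

Definition transmissions (n : nat) : R :=
  \sum_(t < n) ((Ps <= battery e Ps t)%R)%:R.

Lemma transmissionsS n :
  transmissions n.+1 = transmissions n + ((Ps <= battery e Ps n)%R)%:R.
Proof. by rewrite /transmissions big_ord_recr. Qed.

Lemma transmissions_ge0 n : 0 <= transmissions n.
Proof. by apply: sumr_ge0 => t _; exact: ler0n. Qed.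

Lemma transmissions_le n : transmissions n <= n%:R.
Proof.
apply: (@le_trans _ _ (\sum_(t < n) (1 : R))); last first.
  by rewrite sumr_const card_ord.
by apply: ler_sum => t _; rewrite -[1 : R]/(1%:R) ler_nat leq_b1.
Qed.

Lemma battery_balance n :
  battery e Ps n = \sum_(t < n) e t - Ps * transmissions n.
Proof.
elim: n => [|n IHn]; first by rewrite /transmissions !big_ord0 mulr0 subr0.
rewrite /= transmissionsS big_ord_recr /= IHn /consumption -IHn.
by case: ifP => _ /=; lra.
Qed.

Lemma battery_ge0 n : (forall t, 0 <= e t) -> 0 <= battery e Ps n.
Proof.
move=> e_ge0; elim: n => [|n IHn] //=; rewrite /consumption.
by case: (leP Ps (battery e Ps n)) => ?; have := e_ge0 n; lra.
Qed.

(* A transmission at slot n leaves the number of idle slots unchanged, while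
   an idle slot n has battery n < Ps, which by [battery_balance] and the
   deficit bound at k = n leaves at most (Ps + U) / Ps idle slots before n. *)
Lemma idle_slots_le n U : 0 <= Ps ->
  (forall k, (k <= n)%N -> k%:R * Ps - \sum_(t < k) e t <= U) ->
  Ps * (n%:R - transmissions n) <= 2 * Ps + U.
Proof.
move=> Ps_ge0; elim: n => [|n IHn] deficit_le.
  by have := deficit_le 0%N (leqnn _); rewrite /transmissions !big_ord0 /=; lra.
have {IHn} := IHn (fun k kn => deficit_le k (leqW kn)).
rewrite transmissionsS; case: (leP Ps (battery e Ps n)) => [_|idle] /=;
  rewrite -natr1; first lra.
have := deficit_le n (leqnSn n); move: idle; rewrite battery_balance; lra.
Qed.

End battery.

Section measurable_comparison.
Context {d : measure_display} {T : measurableType d} {R : realType}.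

Lemma measurable_ler (h1 h2 : T -> R) :
  measurable_fun setT h1 -> measurable_fun setT h2 ->
  measurable [set x | h1 x <= h2 x].
Proof.
by move=> mh1 mh2; rewrite -[X in measurable X]setTI; exact: measurable_fun_le.
Qed.

Lemma measurable_ltr (h1 h2 : T -> R) :
  measurable_fun setT h1 -> measurable_fun setT h2 ->
  measurable [set x | h1 x < h2 x].
Proof.
move=> mh1 mh2; rewrite -[X in measurable X]setTI.
under eq_set do rewrite -lte_fin.
by apply: measurable_lte => //; exact/measurable_EFinP.
Qed.

End measurable_comparison.

Section birkhoff_defs.
Context {T : Type} {R : realType} (theta : T -> T).

Definition birkhoff_sum (g : T -> R) (k : nat) (w : T) : R :=
  \sum_(j < k) g (iter j theta w).

Fixpoint birkhoff_max (g : T -> R) (n : nat) (w : T) : R :=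
  if n is n'.+1 then Num.max (birkhoff_max g n' w) (birkhoff_sum g n w) else 0.

Definition birkhoff_bounded (g : T -> R) (m : nat) : set T :=
  [set w | forall k, birkhoff_sum g k w <= m%:R].

End birkhoff_defs.

Section birkhoff_sums.
Context {T : Type} {R : realType} (theta : T -> T).
Implicit Types (g : T -> R) (w : T).

Lemma birkhoff_sum0 g w : birkhoff_sum theta g 0 w = 0.
Proof. by rewrite /birkhoff_sum big_ord0. Qed.

Lemma birkhoff_sumS g k w :
  birkhoff_sum theta g k.+1 w = g w + birkhoff_sum theta g k (theta w).
Proof.
rewrite /birkhoff_sum big_ord_recl; congr (_ + _); apply: eq_bigr => j _.
by rewrite /bump /= add0n -iterSr iterS.
Qed.

Lemma birkhoff_sum_cstB (f : T -> R) a k w :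
  birkhoff_sum theta (fun x => a - f x) k w = k%:R * a - birkhoff_sum theta f k w.
Proof. by rewrite /birkhoff_sum sumrB sumr_const card_ord mulr_natl. Qed.

Lemma birkhoff_max_ge0 g n w : 0 <= birkhoff_max theta g n w.
Proof. by elim: n => [|n IHn] //=; rewrite le_max IHn. Qed.

Lemma le_birkhoff_max g n k w :
  (k <= n)%N -> birkhoff_sum theta g k w <= birkhoff_max theta g n w.
Proof.
elim: n => [|n IHn] /=; first by rewrite leqn0 => /eqP ->; rewrite birkhoff_sum0.
rewrite leq_eqVlt => /predU1P[->|]; first by rewrite le_max lexx orbT.
by rewrite ltnS => /IHn k_le; rewrite le_max k_le.
Qed.

Lemma birkhoff_max_attained g n w :
  exists2 k, (k <= n)%N & birkhoff_max theta g n w = birkhoff_sum theta g k w.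
Proof.
elim: n => [|n [k kn IHn]] /=; first by exists 0%N; rewrite ?birkhoff_sum0.
by case: leP => _; [exists n.+1 | exists k => //; exact: leqW].
Qed.

Lemma birkhoff_max_homo g w :
  {homo birkhoff_max theta g ^~ w : m n / (m <= n)%N >-> m <= n}.
Proof.
move=> m n /subnK <-; elim: (n - m)%N => [//|k IHk].
by rewrite addSn /= le_max IHk.
Qed.

(* A positive maximum is attained at some k >= 1, and the sum of length k
   starting at w is g w plus a sum of length k - 1 starting at theta w. *)
Lemma birkhoff_max_shift g n w :
  0 < birkhoff_max theta g n w ->
  birkhoff_max theta g n w <= g w + birkhoff_max theta g n (theta w).
Proof.
have [[|k] kn ->] := birkhoff_max_attained g n w; first by rewrite birkhoff_sum0 ltxx.
by move=> _; rewrite birkhoff_sumS lerD2l le_birkhoff_max // ltnW.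
Qed.

Lemma birkhoff_bounded_homo g : nondecreasing_seq (birkhoff_bounded theta g).
Proof.
move=> m n mn; apply/subsetPset => w Sm k.
by apply: le_trans (Sm k) _; rewrite ler_nat.
Qed.

(* Bounding sums from theta w and from w only differ by the term |g w|. *)
Lemma preimage_birkhoff_bounded g :
  theta @^-1` (\bigcup_m birkhoff_bounded theta g m) =
  \bigcup_m birkhoff_bounded theta g m.
Proof.
apply/seteqP; split => w [m _ Sm]; exists (Num.truncn (m%:R + `|g w|)).+1 => // k;
  apply: le_trans (ltW (truncnS_gt _)).
- case: k => [|k]; first by rewrite birkhoff_sum0 addr_ge0.
  by rewrite birkhoff_sumS; have := Sm k; have := ler_norm (g w); lra.
- have := Sm k.+1; rewrite birkhoff_sumS.
  by have := ler_norm (- g w); rewrite normrN; lra.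
Qed.

End birkhoff_sums.

Section measurable_birkhoff.
Context {d : measure_display} {T : measurableType d} {R : realType} {theta : T -> T}.
Hypothesis mtheta : measurable_fun setT theta.
Implicit Types (g : T -> R).

Lemma measurable_iter k : measurable_fun setT (iter k theta).
Proof.
elim: k => [|k IHk] /=; first exact: measurable_id.
exact: measurableT_comp mtheta IHk.
Qed.

Lemma measurable_birkhoff_sum g k :
  measurable_fun setT g -> measurable_fun setT (birkhoff_sum theta g k).
Proof.
move=> mg; apply: measurable_sum => j.
exact: measurableT_comp mg (measurable_iter j).
Qed.

Lemma measurable_birkhoff_max g n :
  measurable_fun setT g -> measurable_fun setT (birkhoff_max theta g n).
Proof.
move=> mg; elim: n => [|n IHn] /=; first exact: measurable_cst.
exact: measurable_maxr IHn (measurable_birkhoff_sum g n.+1 mg).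
Qed.

Lemma measurable_birkhoff_bounded g m :
  measurable_fun setT g -> measurable (birkhoff_bounded theta g m).
Proof.
move=> mg; rewrite [X in measurable X](_ : _ =
    \bigcap_k [set w | birkhoff_sum theta g k w <= m%:R]).
  apply: bigcapT_measurable => k.
  by apply: measurable_ler; [exact: measurable_birkhoff_sum|exact: measurable_cst].
by apply/seteqP; split => w /= Sk k; [move=> _ | ]; apply: Sk.
Qed.

End measurable_birkhoff.

Section measure_preserving.
Context {d : measure_display} {T : measurableType d} {R : realType}.
Context {P : probability T R} {theta : T -> T}.
Hypothesis theta_mp : measure_preserving P theta.

Let mtheta : measurable_fun setT theta := theta_mp.1.

Lemma ge0_integral_comp (h : T -> \bar R) :
  measurable_fun setT h -> (forall x, (0 <= h x)%E) ->
  (\int[P]_x h (theta x) = \int[P]_x h x)%E.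
Proof.
move=> mh h_ge0; have [_ theta_pres] := theta_mp.
have := ge0_integral_pushforward mtheta P measurableT mh (fun x _ => h_ge0 x).
rewrite preimage_setT => <-.
apply: eq_measure_integral => A mA _ /=.
by rewrite /pushforward theta_pres.
Qed.

Lemma ge0_integral_iter (h : T -> \bar R) (k : nat) :
  measurable_fun setT h -> (forall x, (0 <= h x)%E) ->
  (\int[P]_x h (iter k theta x) = \int[P]_x h x)%E.
Proof.
move=> mh h_ge0; elim: k => [//|k <-].
rewrite -(ge0_integral_comp (h \o iter k theta)) => [|//|x]; last exact: h_ge0.
  by apply: eq_integral => x _; rewrite /= -iterSr.
exact: measurableT_comp mh (measurable_iter mtheta k).
Qed.

Section maximal_ergodic.
Context {f : T -> R} {a : R}.
Hypotheses (mf : measurable_fun setT f) (f_ge0 : forall x, 0 <= f x) (a_ge0 : 0 <= a).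

Let g x := a - f x.

Let mg : measurable_fun setT g.
Proof. by apply: measurable_funB => //; exact: measurable_cst. Qed.

Let positive n := [set w | 0 < birkhoff_max theta g n w].

Let measurable_positive n : measurable (positive n).
Proof.
apply: measurable_ltr; first exact: measurable_cst.
exact: measurable_birkhoff_max mtheta _ _ mg.
Qed.

Lemma birkhoff_max_le n w : birkhoff_max theta g n w <= n%:R * a.
Proof.
have [k kn ->] := birkhoff_max_attained theta g n w.
rewrite birkhoff_sum_cstB (@le_trans _ _ (k%:R * a)) //; last first.
  by rewrite ler_wpM2r // ler_nat.
by rewrite lerBlDr lerDl; apply: sumr_ge0 => j _; exact: f_ge0.
Qed.

Lemma birkhoff_max_step n w :
  birkhoff_max theta g n w + f w * \1_(positive n) w <=
  a * \1_(positive n) w + birkhoff_max theta g n (theta w).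
Proof.
rewrite indicE; have [pos|nonpos] := ltP 0 (birkhoff_max theta g n w).
  rewrite mem_set //= !mulr1; have := birkhoff_max_shift _ _ _ _ pos; rewrite /g; lra.
rewrite memNset /= ?mulr0 ?addr0 ?add0r; last by apply/negP; rewrite -leNgt.
by have := birkhoff_max_ge0 theta g n (theta w); lra.
Qed.

Lemma integral_birkhoff_max_fin_num n :
  (\int[P]_x (birkhoff_max theta g n x)%:E)%E \is a fin_num.
Proof.
rewrite ge0_fin_numE ?integral_ge0 // => [|x _]; last by rewrite lee_fin birkhoff_max_ge0.
apply: (@le_lt_trans _ _ (\int[P]_x (n%:R * a)%:E)%E).
  apply: ge0_le_integral => //.
  - by move=> x _; rewrite lee_fin birkhoff_max_ge0.
  - exact/measurable_EFinP/(measurable_birkhoff_max mtheta _ _ mg).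
  - by move=> x _; rewrite lee_fin birkhoff_max_le.
by rewrite integral_cst // ltey_eq fin_numM // fin_num_measure.
Qed.

(* Integrate [birkhoff_max_step]: theta preserves the integral of the
   (integrable) maximum, which therefore cancels. *)
Lemma maximal_ergodic n :
  (\int[P]_x (f x * \1_(positive n) x)%:E <= a%:E)%E.
Proof.
set M := birkhoff_max theta g n.
have mM : measurable_fun setT M := measurable_birkhoff_max mtheta g n mg.
have M_ge0 x : (0 <= (M x)%:E)%E by rewrite lee_fin birkhoff_max_ge0.
have mfpos : measurable_fun setT (fun x => f x * \1_(positive n) x).
  by apply: measurable_funM => //; exact: measurable_indic.
have step : (\int[P]_x (M x)%:E + \int[P]_x (f x * \1_(positive n) x)%:E <=
             a%:E * P (positive n) + \int[P]_x (M x)%:E)%E.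
  rewrite -[X in (_ <= _ + X)%E](ge0_integral_comp (EFin \o M)) //;
    last exact/measurable_EFinP.
  have -> : (a%:E * P (positive n) = \int[P]_x (a * \1_(positive n) x)%:E)%E.
    under eq_integral do rewrite EFinM.
    rewrite ge0_integralZl_EFin ?integral_indic ?setIT //.
    exact/measurable_EFinP/measurable_indic.
  rewrite -!ge0_integralD //;
    [|by move=> x _; rewrite lee_fin mulr_ge0|exact/measurable_EFinP/measurable_funM
     |by move=> x _; exact: M_ge0|apply: measurableT_comp mtheta; exact/measurable_EFinP
     |exact/measurable_EFinP|by move=> x _; rewrite lee_fin mulr_ge0
     |exact/measurable_EFinP].
  apply: ge0_le_integral => //.
  - by move=> x _; rewrite adde_ge0 // lee_fin mulr_ge0.
  - by apply: emeasurable_funD; exact/measurable_EFinP.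
  - apply: emeasurable_funD; first exact/measurable_EFinP/measurable_funM.
    by apply: measurableT_comp mtheta; exact/measurable_EFinP.
  - by move=> x _; rewrite -!EFinD lee_fin; exact: birkhoff_max_step.
rewrite addeC leeD2rE ?integral_birkhoff_max_fin_num // in step.
apply: le_trans step _; rewrite -[leRHS]mule1.
by apply: lee_wpmul2l; [rewrite lee_fin|exact: probability_le1].
Qed.

Let bounded := \bigcup_m birkhoff_bounded theta g m.

Let measurable_bounded : measurable bounded.
Proof. by apply: bigcupT_measurable => m; exact: measurable_birkhoff_bounded. Qed.

(* Off [bounded] some birkhoff sum of g is positive, so f * \1_(positive n)
   increases to f there; monotone convergence and [maximal_ergodic] conclude. *)
Lemma integral_unbounded_le : (\int[P]_(x in ~` bounded) (f x)%:E <= a%:E)%E.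
Proof.
pose F n x := (f x * \1_(positive n) x)%:E.
have mF n : measurable_fun setT (F n).
  by apply/measurable_EFinP; apply: measurable_funM => //; exact: measurable_indic.
have F_ge0 n x : (0 <= F n x)%E by rewrite lee_fin mulr_ge0.
have F_homo x : nondecreasing_seq (F ^~ x).
  move=> m n mn; rewrite lee_fin ler_wpM2l //.
  have [pos_m|nonpos_m] := ltP 0 (birkhoff_max theta g m x).
    have pos_n := lt_le_trans pos_m (birkhoff_max_homo _ _ _ _ _ mn).
    by rewrite !indicE !mem_set.
  by rewrite [X in X <= _]indicE memNset //=; apply/negP; rewrite -leNgt.
have F_cvg x : cvgn (F ^~ x) by exact: ereal_nondecreasing_is_cvgn.
have mlimF : measurable_fun setT (fun x => limn (F ^~ x)).
  by apply: emeasurable_fun_cvg mF _ => x _; exact: F_cvg.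
apply: (@le_trans _ _ (\int[P]_(x in ~` bounded) limn (F ^~ x))%E).
  apply: ge0_le_integral; [exact: measurableC|by move=> x _; rewrite lee_fin
    |exact/measurable_funTS/measurable_EFinP|exact: measurable_funTS|move=> x /= xNU].
  have [k /negP] : exists k, ~ (birkhoff_sum theta g k x <= 0%:R).
    by apply/existsNP => S_le0; apply: xNU; exists 0%N.
  rewrite -ltNge => Sk_gt0; apply: lime_ge => //; near=> n.
  rewrite /F indicE mem_set ?mulr1 //=.
  apply: (lt_le_trans Sk_gt0); apply: le_birkhoff_max; near: n; by exists k.
apply: (@le_trans _ _ (\int[P]_x limn (F ^~ x))%E).
  apply: ge0_subset_integral => //; first exact: measurableC.
  by move=> x _; apply: lime_ge; [exact: F_cvg | exact: nearW].
rewrite (@monotone_convergence _ T R P setT measurableT F) //.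
apply: lime_le; last by apply: nearW => n; exact: maximal_ergodic.
by apply: ereal_nondecreasing_is_cvgn => m n mn; apply: ge0_le_integral => // x _;
  exact: F_homo.
Unshelve. all: by end_near.
Qed.

Lemma birkhoff_bounded_ae {lam : R} : ergodic P theta ->
  (\int[P]_x (f x)%:E = lam%:E)%E -> a < lam -> P bounded = 1%E.
Proof.
move=> theta_erg int_f a_lt.
have [bounded0|//] := theta_erg _ measurable_bounded (preimage_birkhoff_bounded theta g).
have mEf : measurable_fun setT (EFin \o f) by exact/measurable_EFinP.
have : (\int[P]_x (f x)%:E <= a%:E)%E.
  rewrite -(setUv bounded) ge0_integral_setU //; last 4 first.
  - exact: measurableC.
  - by rewrite setUv.
  - by move=> x _; rewrite lee_fin.
  - by rewrite /disj_set setICr.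
  rewrite null_set_integral ?add0e //; first exact: integral_unbounded_le.
  exact: measurable_funTS.
by rewrite int_f lee_fin => /(lt_le_trans a_lt); rewrite ltxx.
Qed.

Lemma exists_birkhoff_bounded_prob {lam eps : R} : ergodic P theta ->
  (\int[P]_x (f x)%:E = lam%:E)%E -> a < lam -> 0 < eps ->
  exists m, fine (P (~` birkhoff_bounded theta g m)) <= eps.
Proof.
move=> theta_erg int_f a_lt eps_gt0.
have mJ m : measurable (birkhoff_bounded theta g m).
  exact: measurable_birkhoff_bounded mtheta g m mg.
have cvgJ : (P \o birkhoff_bounded theta g) @ \oo --> P bounded.
  exact: nondecreasing_cvg_mu mJ measurable_bounded (birkhoff_bounded_homo theta g).
rewrite (birkhoff_bounded_ae theta_erg int_f a_lt) in cvgJ.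
move: cvgJ => /fine_cvg /= /(cvgrPdist_lt _ _).
move=> /(_ eps eps_gt0) [m _ /(_ m (leqnn m)) /=] Jm_near1.
exists m; rewrite probability_setC // fineB ?fin_num_measure //.
exact: le_trans (ler_norm _) (ltW Jm_near1).
Qed.

End maximal_ergodic.

End measure_preserving.

Section integrable_sums.
Context {d : measure_display} {T : measurableType d} {R : realType}.
Context {mu : {measure set T -> \bar R}}.

Lemma ge0_integrable (h : T -> R) : measurable_fun setT h ->
  (forall x, 0 <= h x) -> (\int[mu]_x (h x)%:E < +oo)%E ->
  mu.-integrable setT (EFin \o h).
Proof.
move=> mh h_ge0 int_lty; apply/integrableP; split; first exact/measurable_EFinP.
by under eq_integral do rewrite gee0_abs ?lee_fin //.
Qed.

Lemma integrableD_EFin (h1 h2 : T -> R) :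
  mu.-integrable setT (EFin \o h1) -> mu.-integrable setT (EFin \o h2) ->
  mu.-integrable setT (EFin \o fun x => h1 x + h2 x).
Proof.
move=> int_h1 int_h2; have := integrableD measurableT int_h1 int_h2.
by apply: eq_integrable => // x _; rewrite /= EFinD.
Qed.

Lemma integrableZl_EFin (k : R) (h : T -> R) :
  mu.-integrable setT (EFin \o h) -> mu.-integrable setT (EFin \o fun x => k * h x).
Proof.
by move=> /(integrableZl measurableT k); apply: eq_integrable => // x _; rewrite /= EFinM.
Qed.

Lemma integrable_sumr (F : nat -> T -> R) n :
  (forall i, mu.-integrable setT (EFin \o F i)) ->
  mu.-integrable setT (EFin \o fun x => \sum_(i < n) F i x).
Proof.
move=> intF; have := @integrable_sum _ _ _ mu setT measurableT 'I_n (index_enum 'I_n)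
  (fun=> true) (fun i x => (F i x)%:E) (fun i _ => intF i).
by apply: eq_integrable => // x _; rewrite /= sumEFin.
Qed.

Lemma Rintegral_sumr (F : nat -> T -> R) n :
  (forall i, mu.-integrable setT (EFin \o F i)) ->
  \int[mu]_x (\sum_(i < n) F i x) = \sum_(i < n) \int[mu]_x F i x.
Proof.
move=> intF; elim: n => [|n IHn].
  by under eq_Rintegral do rewrite big_ord0; rewrite Rintegral_cst // mul0r big_ord0.
under eq_Rintegral do rewrite big_ord_recr.
by rewrite RintegralD // ?IHn ?big_ord_recr //; exact: integrable_sumr.
Qed.

Lemma Rintegral_indic (A : set T) : measurable A -> \int[mu]_x \1_A x = fine (mu A).
Proof. by move=> mA; have := integral_indic mu measurableT mA; rewrite setIT => <-. Qed.

End integrable_sums.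

Lemma Rintegral_cst_probability {d : measure_display} {T : measurableType d}
  {R : realType} (P : probability T R) (c : R) : \int[P]_x c = c.
Proof. by rewrite Rintegral_cst // [fine _](congr1 fine (probability_setT P)) mulr1. Qed.

Section transmission_rate.
Context {d : measure_display} {T : measurableType d} {R : realType}.
Variables (P : probability T R) (theta : T -> T) (f : T -> R) (lam Ps : R).
Hypotheses (theta_mp : measure_preserving P theta) (theta_erg : ergodic P theta).
Hypotheses (mf : measurable_fun setT f) (f_ge0 : forall w, 0 <= f w).
Hypothesis int_f : (\int[P]_x (f x)%:E = lam%:E)%E.
Hypotheses (lam_gt0 : 0 < lam) (Ps_gt0 : 0 < Ps).

Let harvest w t := f (iter t theta w).
Let transmits t := [set w | Ps <= battery (harvest w) Ps t].
Let count n w := transmissions (harvest w) Ps n.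

Lemma measurable_battery t : measurable_fun setT (fun w => battery (harvest w) Ps t).
Proof.
elim: t => [|t IHt] /=; first exact: measurable_cst.
apply: measurable_funD; last exact: measurableT_comp mf (measurable_iter theta_mp.1 t).
apply: measurable_funB => //; rewrite /consumption.
apply: measurable_fun_ifT; [|exact: measurable_cst|exact: measurable_cst].
by apply: measurable_fun_ler => //; exact: measurable_cst.
Qed.

Lemma measurable_transmits t : measurable (transmits t).
Proof. by apply: measurable_ler; [exact: measurable_cst|exact: measurable_battery]. Qed.

Lemma countE n w : count n w = \sum_(t < n) \1_(transmits t) w.
Proof.
apply: eq_bigr => t _; rewrite indicE.
by have [tr|ntr] := boolP (Ps <= _); [rewrite mem_set|rewrite memNset //; apply/negP].
Qed.

Lemma integrable_count n : P.-integrable setT (EFin \o count n).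
Proof.
have := integrable_sumr (fun t => \1_(transmits t) : T -> R) n
  (fun t => integrable_indic P (measurable_transmits t)).
by apply: eq_integrable => // x _; rewrite /= countE.
Qed.

Lemma Rintegral_count n :
  \int[P]_x count n x = \sum_(t < n) fine 'E_P[\1_(transmits t)].
Proof.
under eq_Rintegral do rewrite countE.
rewrite (Rintegral_sumr (fun t => \1_(transmits t) : T -> R)) => [|t]; last first.
  by have := integrable_indic P (measurable_transmits t).
apply: eq_bigr => t _.
by rewrite expectation_indic; [apply: Rintegral_indic|]; exact: measurable_transmits.
Qed.

Lemma integral_harvest t : (\int[P]_x (harvest x t)%:E = lam%:E)%E.
Proof.
rewrite -int_f (ge0_integral_iter theta_mp (fun x => (f x)%:E)) //.
exact/measurable_EFinP.
Qed.

Lemma integrable_harvest t : P.-integrable setT (EFin \o harvest ^~ t).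
Proof.
apply: ge0_integrable => [|x|]; [|exact: f_ge0|by rewrite integral_harvest ltry].
exact: measurableT_comp mf (measurable_iter theta_mp.1 t).
Qed.

Lemma Rintegral_birkhoff_sum n : \int[P]_x birkhoff_sum theta f n x = n%:R * lam.
Proof.
rewrite (Rintegral_sumr (fun t x => harvest x t)) => [|t]; last exact: integrable_harvest.
under eq_bigr do rewrite /Rintegral integral_harvest /=.
by rewrite sumr_const card_ord mulr_natl.
Qed.

Lemma Rintegral_count_le n : Ps * \int[P]_x count n x <= n%:R * Num.min Ps lam.
Proof.
rewrite minr_pMr // le_min; apply/andP; split.
  rewrite mulrC ler_pM2r // -[leRHS](Rintegral_cst_probability P).
  apply: le_Rintegral => //; first exact: integrable_count.
    exact: finite_measure_integrable_cst.
  by move=> w _; exact: transmissions_le.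
rewrite -Rintegral_birkhoff_sum -RintegralZl //; last exact: integrable_count.
apply: le_Rintegral => //.
- exact/integrableZl_EFin/integrable_count.
- exact: (integrable_sumr (fun t x => harvest x t) n integrable_harvest).
move=> w _; have := battery_ge0 (harvest w) Ps n (fun t => f_ge0 (iter t theta w)).
by rewrite battery_balance subr_ge0.
Qed.

Section lower_bound.
Variables (a : R) (m : nat).

Let bounded := birkhoff_bounded theta (fun x => a - f x) m.

Let measurable_unbounded : measurable (~` bounded).
Proof.
apply/measurableC/(measurable_birkhoff_bounded theta_mp.1).
exact: measurable_funB mf.
Qed.

(* On [bounded], the energy deficit k Ps - S_k after k <= n slots is at most
   n (Ps - min Ps a) + m, so [idle_slots_le] applies. *)
Lemma count_ge_pathwise n w :
  n%:R * Num.min Ps a <=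
  Ps * count n w + n%:R * Ps * \1_(~` bounded) w + (2 * Ps + m%:R).
Proof.
have count_ge0 := transmissions_ge0 (harvest w) Ps n.
have min_le : Num.min Ps a <= Ps by rewrite ge_min lexx.
have c_ge0 : 0 <= 2 * Ps + m%:R by rewrite addr_ge0 // mulr_ge0 // ltW.
rewrite indicE; have [wJ|wNJ] := pselect (bounded w); last first.
  rewrite mem_set //= mulr1.
  have := ler_wpM2l (ler0n R n) min_le; have := mulr_ge0 (ltW Ps_gt0) count_ge0.
  rewrite /count; lra.
rewrite memNset /=; last by apply.
rewrite mulr0 addr0.
have deficit_le k : (k <= n)%N ->
    k%:R * Ps - \sum_(t < k) harvest w t <= n%:R * (Ps - Num.min Ps a) + m%:R.
  move=> kn; have := wJ k; rewrite birkhoff_sum_cstB.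
  have : k%:R * (Ps - a) <= k%:R * (Ps - Num.min Ps a).
    by rewrite ler_wpM2l // lerB // ge_min lexx orbT.
  have : k%:R * (Ps - Num.min Ps a) <= n%:R * (Ps - Num.min Ps a).
    by rewrite ler_wpM2r ?subr_ge0 // ler_nat.
  rewrite /birkhoff_sum; lra.
have := idle_slots_le (harvest w) Ps n _ (ltW Ps_gt0) deficit_le; rewrite /count; lra.
Qed.

Lemma count_ge n :
  n%:R * Num.min Ps a <=
  Ps * \int[P]_x count n x + n%:R * Ps * fine (P (~` bounded)) + (2 * Ps + m%:R).
Proof.
have int_count := integrable_count n.
have int_unbounded : P.-integrable setT (EFin \o \1_(~` bounded)).
  by have := integrable_indic P measurable_unbounded.
have int_cst c : P.-integrable setT (EFin \o cst c).
  exact: finite_measure_integrable_cst.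
rewrite -Rintegral_indic // -!RintegralZl //.
rewrite -(Rintegral_cst_probability P (2 * Ps + m%:R)).
rewrite -!RintegralD //; last 4 first.
- by apply: integrableD_EFin; exact: integrableZl_EFin.
- exact: int_cst.
- exact: integrableZl_EFin.
- exact: integrableZl_EFin.
rewrite -[leLHS](Rintegral_cst_probability P).
apply: le_Rintegral => //; [exact: int_cst| |by move=> w _; exact: count_ge_pathwise].
apply: integrableD_EFin; last exact: int_cst.
by apply: integrableD_EFin; exact: integrableZl_EFin.
Qed.

End lower_bound.

Let mean n := n%:R^-1 * \int[P]_x count n x.

Lemma mean_count_le n : Ps * mean n <= Num.min Ps lam.
Proof.
have [->|n_gt0] := posnP n.
  by rewrite /mean invr0 mul0r mulr0 le_min !ltW.
by rewrite /mean mulrCA ler_pdivrMl ?ltr0n //; exact: Rintegral_count_le.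
Qed.

(* Take a = lam - eta slightly below the mean harvest, m so large that the
   sums of a - f stay below m with probability close to one, and then n so
   large that the constant 2 Ps + m of [count_ge] is negligible. *)
Lemma mean_count_ge eps : 0 < eps ->
  \forall n \near \oo, Num.min Ps lam - eps <= Ps * mean n.
Proof.
move=> eps_gt0; have Ps_ge0 := ltW Ps_gt0.
pose eta := Num.min (lam / 2) (eps / 3).
have eta_gt0 : 0 < eta by rewrite lt_min !divr_gt0.
have eta_le_lam : eta <= lam / 2 by rewrite ge_min lexx.
have eta_le_eps : eta <= eps / 3 by rewrite ge_min lexx orbT.
pose a := lam - eta.
have a_ge0 : 0 <= a by move: lam_gt0 eta_le_lam; rewrite /a; lra.
have a_lt : a < lam by rewrite /a; lra.
have min_a : Num.min Ps lam - eta <= Num.min Ps a.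
  have min_le_Ps : Num.min Ps lam <= Ps by rewrite ge_min lexx.
  have min_le_lam : Num.min Ps lam <= lam by rewrite ge_min lexx orbT.
  by rewrite le_min /a; apply/andP; split; lra.
have delta_gt0 : 0 < eps / (3 * Ps) by rewrite divr_gt0 ?mulr_gt0.
have [m Jm] := exists_birkhoff_bounded_prob theta_mp mf f_ge0 a_ge0 theta_erg int_f
  a_lt delta_gt0.
have PsJm : Ps * fine (P (~` birkhoff_bounded theta (fun x => a - f x) m)) <= eps / 3.
  have -> : eps / 3 = Ps * (eps / (3 * Ps)) by field; rewrite gt_eqF.
  exact: ler_wpM2l.
set c := 2 * Ps + m%:R.
have c_ge0 : 0 <= c by rewrite addr_ge0 // mulr_ge0.
near=> n.
have n_gt : c / (eps / 3) < n%:R by near: n; exact: nbhs_infty_gtr.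
have n_gt0 : 0 < n%:R :> R.
  by apply: le_lt_trans n_gt; rewrite divr_ge0 // ltW // divr_gt0.
have c_lt : c < n%:R * (eps / 3) by rewrite -ltr_pdivrMr ?divr_gt0.
have := count_ge a m n; rewrite -/c.
have := ler_wpM2l (ltW n_gt0) min_a; have := ler_wpM2l (ltW n_gt0) PsJm.
have := ler_wpM2l (ltW n_gt0) eta_le_eps.
move=> *; rewrite /mean [leRHS]mulrCA ler_pdivlMl //; lra.
Unshelve. all: by end_near.
Qed.

Lemma cvg_mean_transmissions :
  (fun n => n%:R^-1 * \sum_(t < n) fine 'E_P[\1_(transmits t)]) @ \oo -->
  Num.min 1 (lam / Ps).
Proof.
have minE : Num.min Ps lam = Ps * Num.min 1 (lam / Ps).
  by rewrite minr_pMr ?ltW // mulr1 mulrCA divff ?gt_eqF // mulr1.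
under eq_fun do rewrite -Rintegral_count.
apply/cvgrPdist_le => eps eps_gt0; near=> n.
have up : mean n <= Num.min 1 (lam / Ps).
  by rewrite -(ler_pM2l Ps_gt0) -minE mean_count_le.
have low : Num.min 1 (lam / Ps) - eps <= mean n.
  rewrite -(ler_pM2l Ps_gt0) mulrBr -minE; near: n.
  by apply: mean_count_ge; exact: mulr_gt0.
by rewrite ler_norml; apply/andP; split; move: up low; rewrite /mean; lra.
Unshelve. all: by end_near.
Qed.

End transmission_rate.

Theorem lemma1 (d : measure_display) (T : measurableType d) (R : realType)
  (P : probability T R) (theta : T -> T) (f : T -> R) (lamS PS : R) :
  measure_preserving P theta -> ergodic P theta ->
  measurable_fun setT f -> (forall w, 0 <= f w) ->
  ('E_P[f] = lamS%:E)%E -> 0 < lamS -> 0 < PS ->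
  let E := fun w (t : nat) => f (iter t theta w) in
  let B := fun (t : nat) w => battery (E w) PS t in
  (fun n : nat => (n%:R^-1 : R) *
     \sum_(t < n) fine ('E_P[\1_[set w | (PS <= B t w)%R]])%E)
    @ \oo --> (Num.min 1 (lamS / PS) : R).
Proof.
move=> theta_mp theta_erg mf f_ge0 Ef lam_gt0 Ps_gt0 E B.
have int_f : (\int[P]_x (f x)%:E = lamS%:E)%E by rewrite -Ef unlock.
exact: cvg_mean_transmissions.
Qed.
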